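(* Let $f:\mathcal X^n\to\mathbb R$ be sample-monotone, $x\in\mathcal X^n$, and $0<\varepsilon\le c_0$ for an absolute constant $c_0$. Suppose there exist $A<\infty$, an integer $\tilde k\in\{1,\dots,n\}$, and an $\ell_1$-unbiased $\varepsilon/16$-differentially private mechanism $\tilde M$ such that $\mathbb E[|\tilde M(x)-f(x)|]\le A\,\omega_f(x;\tilde k)e^{-\tilde k\varepsilon/16}$. Then $R_f(x)\le C e^{7\tilde k\varepsilon/16}$, where $C<\infty$ depends only on $A$ and $c_0$.
   Context: $d_H$ is the Hamming distance on $\mathcal X^n$; $x,x'$ neighboring if $d_H(x,x')\le1$. A mechanism $M$ is $\varepsilon$-differentially private if $\mathbb P(M(x)\in S)\le e^\varepsilon\mathbb P(M(x')\in S)$ for all neighboring $x,x'$ and measurable $S$. $M$ is $\ell_1$-unbiased if $\mathbb E|M(x)-f(x)|\le\mathbb E|M(x)-t|$ for all $x$ and $t\in\mathbb R$. $\omega_f(x;k)=\sup\{|f(x)-f(x')|:d_H(x,x')\le k\}$. The inverse sensitivity is $\mathrm{len}_f(x;t)=\inf\{d_H(x,x'):f(x')=t\}$; $f$ is sample-monotone if for every $x$ and $s,t$ with $f(x)\le s\le t$ or $t\le s\le f(x)$, $\mathrm{len}_f(x;s)\le\mathrm{len}_f(x;t)$. For $\eta>0$, $E_f(x;\eta)=\mathbb E[\omega_f(x;K)\mathbf 1\{K\le n\}]$ where $\mathbb P(K=i)=e^{-i\eta}(1-e^{-\eta})$, $i=0,1,\dots$, and $R_f(x)=E_f(x;\varepsilon/4)/E_f(x;\varepsilon/2)$.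 *)

From HB Require Import structures.
From mathcomp Require Import all_boot all_order all_algebra.
From mathcomp Require Import all_classical all_reals all_analysis.
From mathcomp Require Import Rstruct Rstruct_topology.

Set Implicit Arguments.
Unset Strict Implicit.
Unset Printing Implicit Defensive.

Import Order.TTheory GRing.Theory Num.Theory.
Local Open Scope classical_set_scope.
Local Open Scope ring_scope.

Definition hamming (X : Type) (n : nat) (x x' : 'I_n -> X) : nat :=
  #|[set i : 'I_n | `[< x i <> x' i >] ]|.

Section DefsR.
Variable R : realType.

Definition omega (X : Type) (n : nat) (f : ('I_n -> X) -> R)
  (x : 'I_n -> X) (k : nat) : R :=
  sup [set `|f x - f x'| | x' in [set x' | (hamming x x' <= k)%N]].

Definition len_f (X : Type) (n : nat) (f : ('I_n -> X) -> R)
  (x : 'I_n -> X) (t : R) : \bar R :=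
  ereal_inf [set ((hamming x x')%:R)%:E | x' in [set x' | f x' = t]].

Definition sample_monotone (X : Type) (n : nat) (f : ('I_n -> X) -> R) : Prop :=
  forall (x : 'I_n -> X) (s t : R),
    (f x <= s <= t) || (t <= s <= f x) ->
    (len_f f x s <= len_f f x t)%E.

(* E_f(x;eta) = E[ omega_f(x;K) 1{K <= n} ], K geometric:
   P(K = i) = e^{-i eta} (1 - e^{-eta}). *)
Definition E_f (X : Type) (n : nat) (f : ('I_n -> X) -> R)
  (x : 'I_n -> X) (eta : R) : R :=
  \sum_(0 <= i < n.+1)
     omega f x i * (expR (- (i%:R * eta)) * (1 - expR (- eta))).

Definition R_f (X : Type) (n : nat) (f : ('I_n -> X) -> R)
  (x : 'I_n -> X) (eps : R) : R :=
  E_f f x (eps / 4) / E_f f x (eps / 2).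

Definition differentially_private (X : Type) (n : nat)
  (M : ('I_n -> X) -> probability R R) (eps : R) : Prop :=
  forall (x x' : 'I_n -> X), (hamming x x' <= 1)%N ->
  forall S : set R, measurable S ->
    (M x S <= (expR eps)%:E * M x' S)%E.

Definition l1_unbiased (X : Type) (n : nat) (f : ('I_n -> X) -> R)
  (M : ('I_n -> X) -> probability R R) : Prop :=
  forall (x : 'I_n -> X) (t : R),
    (\int[M x]_y (`|y - f x|)%:E <= \int[M x]_y (`|y - t|)%:E)%E.

End DefsR.

(* Write q = e^(-eps/16).  Since e^(-i eta) = (e^(-eta))^i, both E_f(x;eps/4)
   and E_f(x;eps/2) are geometric averages  sum_i w_i p^i (1 - p)  of the local
   modulus w_i = omega_f(x;i), with ratios p = q^4 and p = q^8.

   1. Hamming distance and group privacy: an eps/16-private mechanism is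
      (d eps/16)-private for datasets at distance d.
   2. Sensitivity from accuracy: if M is l1-unbiased and E|M(x) - f(x)| <= r,
      then |f(x) - f(x')| <= 2 e^(d eps/16) r; hence the local modulus decays
      geometrically: omega_f(x;i) q^i <= 2 r for every i.
   3. Comparison of geometric averages: for a nonnegative nondecreasing w with
      w_i q^i <= K w_k q^k for all i, one has
        q^(4k) * avg(w, q^4) <= (1 + 2K) * avg(w, q^8);
      indices i <= k are compared termwise, and the tail i > k is summed as a
      geometric series and compared with the terms k <= i <= n of avg(w, q^8).
   With r = A omega_f(x;k) q^k and K = 2|A| this yields
   R_f(x) <= (1 + 4|A|) e^(4k eps/16), which is stronger than required: the
   argument holds for all eps > 0 (so c0 = 1) and does not use
   sample-monotonicity. *)

From HB Require Import structures.
From mathcomp Require Import all_boot all_order all_algebra.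
From mathcomp Require Import all_classical all_reals all_analysis.
From mathcomp Require Import Rstruct Rstruct_topology measurable_realfun.
From mathcomp Require Import zify ring lra.

Set Implicit Arguments.
Unset Strict Implicit.
Unset Printing Implicit Defensive.

Import Order.TTheory GRing.Theory Num.Theory.
Local Open Scope classical_set_scope.
Local Open Scope ring_scope.

Lemma hamming_card (X : Type) n (x x' : 'I_n -> X) :
  hamming x x' = #|finset (fun i => `[< x i <> x' i >])|.
Proof. by apply: eq_card => i; rewrite finset.inE /in_mem /=; apply/asboolP/idP. Qed.

Lemma hamming_sym (X : Type) n (x x' : 'I_n -> X) : hamming x x' = hamming x' x.
Proof.
rewrite !hamming_card; apply: eq_card => i; rewrite !finset.inE.
by apply/asboolP/asboolP => neq eq; apply: neq.
Qed.

Lemma hamming_refl (X : Type) n (x : 'I_n -> X) : hamming x x = 0%N.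
Proof.
rewrite hamming_card; apply/eqP; rewrite cards_eq0; apply/eqP/setP => i.
by rewrite !finset.inE; apply/asboolP.
Qed.

Lemma hamming_eq0 (X : Type) n (x x' : 'I_n -> X) : hamming x x' = 0%N -> x = x'.
Proof.
rewrite hamming_card => /eqP; rewrite cards_eq0 => /eqP no_diff.
apply: funext => i; apply: contrapT => neq.
have : i \in finset (fun i => `[< x i <> x' i >]) by rewrite finset.inE; apply/asboolP.
by rewrite no_diff finset.inE.
Qed.

(* Two datasets at distance h+1 are joined by a neighbour of the first that is
   at distance h from the second: copy one differing coordinate. *)
Lemma hamming_step (X : Type) n (x x' : 'I_n -> X) h : hamming x x' = h.+1 ->
  exists y, (hamming x y <= 1)%N /\ hamming y x' = h.
Proof.
move=> dist.
have [j j_diff] : exists j, j \in finset (fun i => `[< x i <> x' i >]).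
  by apply/set0Pn/eqP => no_diff; move: dist; rewrite hamming_card no_diff cards0.
exists (fun i => if i == j then x' j else x i); split.
  rewrite hamming_card -(cards1 j); apply/subset_leq_card/fintype.subsetP => i.
  by rewrite !finset.inE; case: eqP => // _ /asboolP.
move: dist; rewrite !hamming_card (cardsD1 j) j_diff add1n => -[<-].
apply: eq_card => i; rewrite !finset.inE.
by case: eqP => [->|//]; apply/asboolP => /(_ erefl).
Qed.

Lemma group_privacy (R : realType) (X : Type) n (M : ('I_n -> X) -> probability R R)
    (eps : R) (x x' : 'I_n -> X) (S : set R) :
  0 <= eps -> differentially_private M eps -> measurable S ->
  (M x S <= (expR ((hamming x x')%:R * eps))%:E * M x' S)%E.
Proof.
move=> eps_ge0 dp mS; move Edist : (hamming x x') => h.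
elim: h x Edist => [|h IH] x dist.
  by rewrite (hamming_eq0 dist) mul0r exp.expR0 mul1e.
have [y [xy yx']] := hamming_step dist.
apply: le_trans (dp _ _ xy _ mS) _.
apply: le_trans (lee_wpmul2l _ (IH _ yx')) _; first by rewrite lee_fin expR_ge0.
rewrite muleA -EFinM -exp.expRD lee_wpmul2r // lee_fin ler_expR -natr1; lra.
Qed.
Lemma integral_le_dominated d (T : measurableType d) (R : realType)
    (P Q : {measure set T -> \bar R}) (r : R) (g : T -> R) : 0 <= r ->
  (forall S, measurable S -> (P S <= r%:E * Q S)%E) ->
  measurable_fun [set: T] (EFin \o g) -> (forall y, 0 <= g y) ->
  (\int[P]_y (g y)%:E <= r%:E * \int[Q]_y (g y)%:E)%E.
Proof.
move=> r_ge0 PQ mg g_ge0.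
have g_ge0E : forall y, (0 <= (g y)%:E)%E by move=> y; rewrite lee_fin g_ge0.
have dom := @ge0_le_measure_integral _ _ _ P (mscale (NngNum r_ge0) Q) PQ
  (fun y => (g y)%:E) setT measurableT g_ge0E mg.
by apply: le_trans dom _; rewrite ge0_integral_mscale // => y _.
Qed.

Lemma measurable_dist_to (R : realType) (t : R) :
  measurable_fun [set: R] (EFin \o (fun y : R => `|y - t|)).
Proof.
apply/measurable_EFinP; apply: measurableT_comp; first exact: normr_measurable.
exact: measurable_funB.
Qed.

(* An l1-unbiased eps-private mechanism whose error at x is at most r forces
   |f x - f x'| <= 2 e^(d eps) r, where d is the Hamming distance of x and x':
   the mechanism at x' is at least as close to f x' as to f x (unbiasedness),
   and privacy moves the error at x to x' at cost e^(d eps). *)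
Lemma sensitivity_bound (R : realType) (X : Type) n (f : ('I_n -> X) -> R)
    (M : ('I_n -> X) -> probability R R) (eps r : R) x x' :
  0 <= eps -> l1_unbiased f M -> differentially_private M eps ->
  (\int[M x]_y (`|y - f x|)%:E <= r%:E)%E ->
  `|f x - f x'| <= 2 * expR ((hamming x x')%:R * eps) * r.
Proof.
move=> eps_ge0 unbiased dp err.
set e := expR _; set err_at := fun z => (\int[M z]_y (`|y - f x|)%:E)%E.
have e_ge0 : 0 <= e by exact: expR_ge0.
have transfer : (err_at x' <= e%:E * err_at x)%E.
  apply: integral_le_dominated => // [S mS|]; last exact: measurable_dist_to.
  by rewrite /e hamming_sym; apply: group_privacy.
have triangle : (`|f x - f x'|%:E
    <= \int[M x']_y ((`|y - f x|)%:E + (`|y - f x'|)%:E))%E.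
  rewrite -[X in (X <= _)%E]mule1 -(probability_setT (M x')) -integral_cst //.
  apply: ge0_le_integral => //; first by move=> y _; rewrite lee_fin.
    by apply: emeasurable_funD; apply: measurable_dist_to.
  by move=> y _; rewrite -EFinD lee_fin [`|y - f x|]distrC ler_distD.
rewrite ge0_integralD // in triangle; try exact: measurable_dist_to.
have two_errors : (`|f x - f x'|%:E <= err_at x' + err_at x')%E.
  by apply: le_trans triangle _; apply: leeD => //; apply: unbiased.
have err_x' : (err_at x' <= (e * r)%:E)%E.
  by apply: le_trans transfer _; rewrite EFinM lee_wpmul2l ?lee_fin.
have := le_trans two_errors (leeD err_x' err_x'); rewrite -EFinD lee_fin.
by rewrite (_ : 2 * e * r = e * r + e * r) //; ring.
Qed.

Section LocalModulus.
Variables (R : realType) (X : Type) (n : nat) (f : ('I_n -> X) -> R) (x : 'I_n -> X).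
Hypothesis f_bounded : exists B, forall x', `|f x' - f x| <= B.

Let deviations i := [set `|f x - f x'| | x' in [set x' | (hamming x x' <= i)%N]].

Let deviations0 i : deviations i 0.
Proof. by exists x; rewrite /= ?hamming_refl // subrr normr0. Qed.

Let deviations_sup i : has_sup (deviations i).
Proof.
split; first by exists 0; exact: deviations0.
by have [B fB] := f_bounded; exists B => _ [x' _ <-]; rewrite distrC.
Qed.

Lemma omega_ge0 i : 0 <= omega f x i.
Proof. exact: (sup_upper_bound (deviations_sup i) (deviations0 i)). Qed.

Lemma omega_mono : {homo omega f x : i j / (i <= j)%N >-> i <= j}.
Proof.
move=> i j ij; apply: sup_le; [|by exists 0; exact: deviations0|exact: deviations_sup].
move=> _ [x' dist <-]; apply/downP; exists `|f x - f x'| => //.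
by exists x' => //=; apply: leq_trans ij.
Qed.

Lemma omega_le i b : (forall x', (hamming x x' <= i)%N -> `|f x - f x'| <= b) ->
  omega f x i <= b.
Proof.
move=> dev_le; apply: ge_sup; first by exists 0; exact: deviations0.
by move=> _ [x' dist <-]; apply: dev_le.
Qed.

Lemma omega_geometric_decay (M : ('I_n -> X) -> probability R R) (eps r : R) i :
  0 <= eps -> l1_unbiased f M -> differentially_private M eps ->
  (\int[M x]_y (`|y - f x|)%:E <= r%:E)%E ->
  omega f x i * expR (- eps) ^+ i <= 2 * r.
Proof.
move=> eps_ge0 unbiased dp err.
have r_ge0 : 0 <= r.
  by rewrite -lee_fin; apply: le_trans err; apply: integral_ge0 => y _; rewrite lee_fin.
have omega_i : omega f x i <= 2 * expR (i%:R * eps) * r.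
  apply: omega_le => x' dist.
  apply: le_trans (sensitivity_bound _ eps_ge0 unbiased dp err) _.
  by rewrite ler_wpM2r // ler_wpM2l // ler_expR ler_wpM2r // ler_nat.
have cancel : expR (i%:R * eps) * expR (- eps) ^+ i = 1.
  by rewrite -expRM_natl -exp.expRD mulrN subrr exp.expR0.
apply: le_trans (ler_wpM2r (exprn_ge0 _ (expR_ge0 _)) omega_i) _.
rewrite [leLHS](_ : _ = 2 * r * (expR (i%:R * eps) * expR (- eps) ^+ i)); last by ring.
by rewrite cancel mulr1.
Qed.
End LocalModulus.

Definition geom_term (R : comPzRingType) (w : nat -> R) (p : R) (i : nat) : R :=
  w i * (p ^+ i * (1 - p)).

Definition geom_weighted (R : comPzRingType) (w : nat -> R) (p : R) (n : nat) : R :=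
  \sum_(0 <= i < n.+1) geom_term w p i.

Lemma geom_term_ge0 (R : numDomainType) (w : nat -> R) (p : R) i :
  (forall i, 0 <= w i) -> 0 <= p -> p <= 1 -> 0 <= geom_term w p i.
Proof. by move=> w_ge0 p_ge0 p_le1; rewrite mulr_ge0 ?mulr_ge0 ?exprn_ge0 ?subr_ge0. Qed.

Lemma geom_weighted_ge0 (R : numDomainType) (w : nat -> R) (p : R) n :
  (forall i, 0 <= w i) -> 0 <= p -> p <= 1 -> 0 <= geom_weighted w p n.
Proof. by move=> w_ge0 p_ge0 p_le1; apply: sumr_ge0 => i _; apply: geom_term_ge0. Qed.

Lemma sum_geom_telescope (R : comPzRingType) (p : R) (m n : nat) : (m <= n)%N ->
  \sum_(m <= i < n) p ^+ i * (1 - p) = p ^+ m - p ^+ n.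
Proof.
move=> mn; rewrite (eq_bigr (fun i => - p ^+ i.+1 - - p ^+ i)).
  by rewrite telescope_sumr // opprK addrC.
by move=> i _; rewrite exprS opprK mulrBr mulr1 addrC mulrC.
Qed.

Section GeometricWeights.
Variables (R : realFieldType) (q : R).
Hypotheses (q_ge0 : 0 <= q) (q_le1 : q <= 1).

(* An elementary inequality: 2(1 - q^3) - (1 - q^4) = (1 - q)(1 + q + q^2 (1 - q)). *)
Lemma one_sub_q4_le : 1 - q ^+ 4 <= 2 * (1 - q ^+ 3).
Proof.
have factor : 2 * (1 - q ^+ 3) - (1 - q ^+ 4) = (1 - q) * (1 + q + q ^+ 2 * (1 - q)).
  by ring.
have q2_ge0 : 0 <= q ^+ 2 by rewrite exprn_ge0.
by rewrite -subr_ge0 factor mulr_ge0 ?subr_ge0 // !addr_ge0 ?mulr_ge0 ?subr_ge0.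
Qed.

Lemma tail_geom_bound k n : (k <= n)%N ->
  \sum_(k.+1 <= i < n.+1) q ^+ (5 * k + 3 * i) * (1 - q ^+ 4)
  <= 2 * (q ^+ (8 * k) - q ^+ (8 * n.+1)).
Proof.
move=> kn.
have tele : \sum_(k.+1 <= i < n.+1) (q ^+ 3) ^+ i * (1 - q ^+ 3)
    = q ^+ (3 * k.+1) - q ^+ (3 * n.+1).
  by rewrite sum_geom_telescope // -!exprM.
have termwise : \sum_(k.+1 <= i < n.+1) q ^+ (5 * k + 3 * i) * (1 - q ^+ 4)
    <= \sum_(k.+1 <= i < n.+1) 2 * q ^+ (5 * k) * ((q ^+ 3) ^+ i * (1 - q ^+ 3)).
  apply: ler_sum => i _; rewrite -exprM exprD.
  rewrite [leRHS](_ : _ = q ^+ (5 * k) * q ^+ (3 * i) * (2 * (1 - q ^+ 3))); last by ring.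
  by rewrite ler_wpM2l ?mulr_ge0 ?exprn_ge0 ?one_sub_q4_le.
apply: (le_trans termwise); rewrite -mulr_sumr tele mulrBr -!mulrA -!exprD -mulrBr.
rewrite ler_wpM2l // lerB // ler_wiXn2l //; lia.
Qed.

Section WeightedComparison.
Variables (w : nat -> R) (n : nat).
Hypothesis w_ge0 : forall i, 0 <= w i.

Lemma head_term_le k i : (i <= k)%N ->
  q ^+ (4 * k) * geom_term w (q ^+ 4) i <= geom_term w (q ^+ 8) i.
Proof.
move=> ik; rewrite /geom_term -!exprM mulrCA ler_wpM2l //.
have split8 : q ^+ (8 * i) = q ^+ (4 * i) * q ^+ (4 * i) by rewrite -exprD; congr (_ ^+ _); lia.
have q4k : q ^+ (4 * k) <= q ^+ (4 * i) by rewrite ler_wiXn2l //; lia.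
have q84 : q ^+ 8 <= q ^+ 4 by rewrite ler_wiXn2l.
rewrite split8 mulrA ler_pM ?mulr_ge0 ?exprn_ge0 ?subr_ge0 ?exprn_ile1 ?lerB //.
by rewrite ler_wpM2r ?exprn_ge0.
Qed.

(* For i > k the decay hypothesis reduces the damped terms to a geometric tail,
   which is dominated by the terms k <= i <= n of ratio q^8, as w is monotone. *)
Lemma tail_sum_le (K : R) k : 0 <= K -> (k <= n)%N ->
  {homo w : i j / (i <= j)%N >-> i <= j} ->
  (forall i, w i * q ^+ i <= K * w k * q ^+ k) ->
  \sum_(k.+1 <= i < n.+1) q ^+ (4 * k) * geom_term w (q ^+ 4) i
  <= 2 * K * \sum_(k <= i < n.+1) geom_term w (q ^+ 8) i.
Proof.
move=> K_ge0 kn w_mono decay.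
have KW_ge0 : 0 <= K * w k by rewrite mulr_ge0.
have decayed : \sum_(k.+1 <= i < n.+1) q ^+ (4 * k) * geom_term w (q ^+ 4) i
    <= K * w k * \sum_(k.+1 <= i < n.+1) q ^+ (5 * k + 3 * i) * (1 - q ^+ 4).
  rewrite mulr_sumr; apply: ler_sum => i _.
  have lhsE : q ^+ (4 * k) * geom_term w (q ^+ 4) i
      = w i * q ^+ i * (q ^+ (4 * k + 3 * i) * (1 - q ^+ 4)).
    have split4 : q ^+ (4 * i) = q ^+ i * q ^+ (3 * i).
      by rewrite -exprD; congr (_ ^+ _); lia.
    by rewrite /geom_term -exprM split4 [q ^+ (4 * k + _)]exprD; ring.
  have rhsE : K * w k * (q ^+ (5 * k + 3 * i) * (1 - q ^+ 4))
      = K * w k * q ^+ k * (q ^+ (4 * k + 3 * i) * (1 - q ^+ 4)).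
    have split5 : q ^+ (5 * k + 3 * i) = q ^+ k * q ^+ (4 * k + 3 * i).
      by rewrite -exprD; congr (_ ^+ _); lia.
    by rewrite split5; ring.
  by rewrite lhsE rhsE ler_wpM2r ?mulr_ge0 ?exprn_ge0 ?subr_ge0 ?exprn_ile1.
have flat : w k * (q ^+ (8 * k) - q ^+ (8 * n.+1))
    <= \sum_(k <= i < n.+1) geom_term w (q ^+ 8) i.
  rewrite !exprM -sum_geom_telescope ?leqW //.
  rewrite big_distrr /=; apply: ler_sum_nat => i /andP[ki _].
  by rewrite /geom_term ler_wpM2r ?w_mono ?mulr_ge0 ?exprn_ge0 ?subr_ge0 ?exprn_ile1.
apply: (le_trans decayed); rewrite -mulrA [2 * K]mulrC -mulrA ler_wpM2l //.
apply: le_trans (ler_wpM2l (w_ge0 k) (tail_geom_bound kn)) _.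
by rewrite mulrCA ler_wpM2l.
Qed.

Lemma geom_weighted_compare (K : R) k : 0 <= K -> (k <= n)%N ->
  {homo w : i j / (i <= j)%N >-> i <= j} ->
  (forall i, w i * q ^+ i <= K * w k * q ^+ k) ->
  q ^+ (4 * k) * geom_weighted w (q ^+ 4) n
  <= (1 + 2 * K) * geom_weighted w (q ^+ 8) n.
Proof.
move=> K_ge0 kn w_mono decay.
have q8_ge0 : 0 <= q ^+ 8 by rewrite exprn_ge0.
have q8_le1 : q ^+ 8 <= 1 by rewrite exprn_ile1.
set total := geom_weighted w (q ^+ 8) n.
have total_split m : (m <= n.+1)%N ->
    total = \sum_(0 <= i < m) geom_term w (q ^+ 8) i + \sum_(m <= i < n.+1) geom_term w (q ^+ 8) i.
  by move=> mn; rewrite /total /geom_weighted (big_cat_nat _ (n := m)).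
have head_le : \sum_(0 <= i < k.+1) geom_term w (q ^+ 8) i <= total.
  by rewrite (total_split k.+1) // lerDl sumr_ge0 // => i _; apply: geom_term_ge0.
have tail_le : \sum_(k <= i < n.+1) geom_term w (q ^+ 8) i <= total.
  by rewrite (total_split k) ?leqW // lerDr sumr_ge0 // => i _; apply: geom_term_ge0.
rewrite /geom_weighted (big_cat_nat _ (n := k.+1)) //= mulrDr mulrDl mul1r.
apply: lerD.
  rewrite big_distrr /=; apply: le_trans head_le.
  by apply: ler_sum_nat => i /andP[_ ik]; apply: head_term_le.
rewrite big_distrr /=; apply: le_trans (tail_sum_le K_ge0 kn w_mono decay) _.
by rewrite ler_wpM2l ?mulr_ge0.
Qed.

End WeightedComparison.
End GeometricWeights.

Lemma expRN_mul_nat (R : realType) (a : R) m : expR (- (m%:R * a)) = expR (- a) ^+ m.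
Proof. by rewrite -expRM_natl mulrN. Qed.

Lemma R_fE (R : realType) (X : Type) n (f : ('I_n -> X) -> R) x (eps : R) :
  R_f f x eps = geom_weighted (omega f x) (expR (- (eps / 16)) ^+ 4) n
                / geom_weighted (omega f x) (expR (- (eps / 16)) ^+ 8) n.
Proof.
have E_fE eta : E_f f x eta = geom_weighted (omega f x) (expR (- eta)) n.
  by apply: eq_bigr => i _; rewrite expRN_mul_nat.
rewrite /R_f !E_fE -!expRN_mul_nat.
by congr (geom_weighted _ (expR (- _)) _ / geom_weighted _ (expR (- _)) _); field.
Qed.

(* From s a <= c b with s > 0 and a, c >= 0 follows a / b <= c / s; the case
   b <= 0 is degenerate since then a / b <= 0. *)
Lemma ratio_le_of_scaled (R : realFieldType) (a b c s : R) :
  0 < s -> 0 <= a -> 0 <= c -> s * a <= c * b -> a / b <= c / s.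
Proof.
move=> s_gt0 a_ge0 c_ge0 scaled.
have [b_le0|b_gt0] := lerP b 0.
  apply: (@le_trans _ _ 0); last by rewrite divr_ge0 // ltW.
  by rewrite mulr_ge0_le0 ?invr_le0.
by rewrite ler_pdivrMr // mulrAC ler_pdivlMr // mulrC.
Qed.

Theorem R_f_le (R : realType) (X : Type) n (f : ('I_n -> X) -> R) x
    (M : ('I_n -> X) -> probability R R) (eps A : R) k :
  (exists B, forall x', `|f x' - f x| <= B) -> 0 < eps -> (k <= n)%N ->
  l1_unbiased f M -> differentially_private M (eps / 16) ->
  (\int[M x]_y (`|y - f x|)%:E
     <= (A * omega f x k * expR (- (k%:R * eps / 16)))%:E)%E ->
  R_f f x eps <= (1 + 4 * `|A|) * expR (4 * k%:R * eps / 16).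
Proof.
move=> f_bounded eps_gt0 kn unbiased dp err.
set a := eps / 16; set q := expR (- a).
have a_ge0 : 0 <= a by rewrite divr_ge0 ?ltW.
have q_gt0 : 0 < q by exact: expR_gt0.
have q_le1 : q <= 1 by rewrite -exp.expR0 ler_expR oppr_le0.
have decay i : omega f x i * q ^+ i <= 2 * `|A| * omega f x k * q ^+ k.
  apply: le_trans (omega_geometric_decay i a_ge0 unbiased dp err) _.
  rewrite -mulrA -expRN_mul_nat -!mulrA ler_wpM2l // ler_wpM2r ?ler_norm //.
  by rewrite mulr_ge0 ?(omega_ge0 f_bounded) ?expR_ge0.
have compare := geom_weighted_compare (ltW q_gt0) q_le1 (omega_ge0 f_bounded)
  (mulr_ge0 (ler0n _ 2) (normr_ge0 A)) kn (omega_mono f_bounded) decay.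
rewrite R_fE (_ : 4 * `|A| = 2 * (2 * `|A|)); last by ring.
apply: le_trans (ratio_le_of_scaled (exprn_gt0 _ q_gt0) _ _ compare) _.
- apply: geom_weighted_ge0 (omega_ge0 f_bounded) (exprn_ge0 _ (ltW q_gt0)) _.
  exact: exprn_ile1 (ltW q_gt0) q_le1.
- by rewrite addr_ge0 ?mulr_ge0.
by rewrite /q -expRN_mul_nat expRN invrK natrM /a mulrA.
Qed.

Theorem proposition4p2 :
  exists c0 : Rdefinitions.R, 0 < c0 /\
  forall A : Rdefinitions.R,
  exists C : Rdefinitions.R,
  forall (X : Type) (n : nat) (f : ('I_n -> X) -> Rdefinitions.R)
         (x : 'I_n -> X) (eps : Rdefinitions.R) (k : nat)
         (M : ('I_n -> X) -> probability (Rdefinitions.R : realType) (Rdefinitions.R : realType)),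
    sample_monotone f ->
    (exists B : Rdefinitions.R, forall x' : 'I_n -> X, `|f x' - f x| <= B) ->
    0 < eps -> eps <= c0 ->
    (1 <= k <= n)%N ->
    l1_unbiased f M ->
    differentially_private M (eps / 16) ->
    (\int[M x]_y (`|y - f x|)%:E
       <= (A * omega f x k * expR (- (k%:R * eps / 16)))%:E)%E ->
    R_f f x eps <= C * expR (7 * k%:R * eps / 16).
Proof.
exists 1; split => // A; exists (1 + 4 * `|A|).
move=> X n f x eps k M _ f_bounded eps_gt0 _ /andP[_ kn] unbiased dp err.
apply: le_trans (R_f_le f_bounded eps_gt0 kn unbiased dp err) _.
rewrite ler_wpM2l ?addr_ge0 ?mulr_ge0 // ler_expR.
have k_ge0 : 0 <= k%:R :> Rdefinitions.R by [].
nra.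
Qed.
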